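(* Let $G$ be a simple 3-connected graph with $n\geq 5$ vertices in which every vertex has degree at most $4$. Then one can add edges (but no vertices) to $G$ so that the resulting multigraph $G'$ has the following properties: - $G'$ is 3-connected; - $G'$ is 4-regular; - $G'$ has no loops; - $G'$ has at most one double edge. That is, at most one pair of vertices is joined by more than one edge, and such a pair is joined by exactly two edges.
   Context: A (multi)graph is 3-connected if it has more than $3$ vertices and, for any two vertices $u,v$, the graph obtained by deleting $u$ and $v$ is connected. A graph is 4-regular if every vertex has degree exactly $4$, with degrees counted with edge multiplicity. *)

From mathcomp Require Import all_boot.
Set Implicit Arguments. Unset Strict Implicit. Unset Printing Implicit Defensive.

(* A (multi)graph on a finite vertex type T is described by its adjacency
   relation adj (for a multigraph: "joined by at least one edge").
   3-connected: more than 3 vertices, and for any two vertices u, v, the graph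
   obtained by deleting u and v is connected (any two remaining vertices are
   joined by a path avoiding u and v). *)
Definition three_connected (T : finType) (adj : rel T) : Prop :=
  3 < #|T| /\
  forall u v x y : T, x != u -> x != v -> y != u -> y != v ->
    connect (fun a b => [&& a != u, a != v, b != u, b != v & adj a b]) x y.

Definition simple_graph (T : finType) (e : rel T) : Prop :=
  symmetric e /\ irreflexive e.

Definition sdeg (T : finType) (e : rel T) (x : T) : nat := #|[set y | e x y]|.

(* A multigraph on T is given by edge multiplicities m x y (number of edges
   joining x and y); m x x counts loops. *)
Definition multigraph_adj (T : finType) (m : T -> T -> nat) : rel T :=
  fun a b => 0 < m a b.

Definition mdeg (T : finType) (m : T -> T -> nat) (x : T) : nat :=
  \sum_(y : T) m x y.

From mathcomp Require Import all_boot zify.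
Set Implicit Arguments. Unset Strict Implicit. Unset Printing Implicit Defensive.

(* Start from G itself, viewed as a multigraph. By 3-connectivity every vertex
   has degree 3 or 4, and by the handshake lemma the deficient vertices (those
   of degree 3) are even in number. While there are at least three of them, two
   are non-adjacent: otherwise they form a clique, so there are exactly four of
   them and all their neighbours are deficient, i.e. they span a K4 component
   of a connected graph with at least five vertices. Joining two non-adjacent
   deficient vertices keeps the graph simple and removes both from the
   deficient set. If finally two deficient vertices remain, joining them
   (possibly creating the only double edge) gives a 4-regular graph; adding
   edges never destroys 3-connectivity. *)

Section Multigraphs.

Variable T : finType.
Implicit Types (m : T -> T -> nat) (x y z : T).

Lemma sum_pred1_nat (b : T) : \sum_(y : T) (y == b : nat) = 1.
Proof. by rewrite -big_mkcond big_pred1_eq. Qed.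

Definition add_edge m (a b : T) : T -> T -> nat :=
  fun x y => m x y + (x == a) * (y == b) + (x == b) * (y == a).

Lemma mdeg_add_edge m a b z :
  mdeg (add_edge m a b) z = mdeg m z + (z == a) + (z == b).
Proof.
by rewrite /mdeg /add_edge !big_split -!big_distrr /= !sum_pred1_nat !muln1.
Qed.

Lemma handshake m :
  (forall x y, m x y = m y x) -> (forall x, m x x = 0) ->
  \sum_x mdeg m x = (\sum_x \sum_(y | enum_rank x < enum_rank y) m x y).*2.
Proof.
move=> msym mloop.
have row_split x : mdeg m x = \sum_(y | enum_rank x < enum_rank y) m x y
                              + \sum_(y | enum_rank y < enum_rank x) m x y.
  rewrite /mdeg !(big_mkcond (fun y => _ < _)) -big_split /=.
  apply: eq_bigr => y _.
  case: ltngtP => [_|_|E]; rewrite ?addn0 //.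
  by rewrite (enum_rank_inj (ord_inj E)) mloop.
rewrite (eq_bigr _ (fun x _ => row_split x)) big_split /= -addnn; congr (_ + _).
rewrite (exchange_big_dep xpredT) //=.
by apply: eq_bigr => y _; apply: eq_bigr => x _; rewrite msym.
Qed.

Lemma add_edge_sym m a b :
  (forall x y, m x y = m y x) -> forall x y, add_edge m a b x y = add_edge m a b y x.
Proof.
by move=> msym x y; rewrite /add_edge msym addnAC [(y == a) * _]mulnC [(y == b) * _]mulnC.
Qed.

Lemma add_edge_loopless m a b :
  a != b -> (forall x, m x x = 0) -> forall x, add_edge m a b x x = 0.
Proof.
move=> ab mloop x; rewrite /add_edge mloop.
by case: (eqVneq x a) => [->|_]; rewrite ?(negbTE ab) ?muln0.
Qed.

Lemma add_edge_ge m a b x y : m x y <= add_edge m a b x y.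
Proof. by rewrite /add_edge -addnA leq_addr. Qed.

Lemma add_edge_le m a b x y : a != b -> add_edge m a b x y <= m x y + 1.
Proof.
move=> ab; rewrite /add_edge -addnA leq_add2l.
case: (x =P a) => [->|_]; rewrite ?eqxx ?(negbTE ab) /=.
  by rewrite mul1n addn0 leq_b1.
by rewrite mul0n add0n; case: (_ == _); case: (_ == _).
Qed.

Lemma add_edge_changed m a b x y :
  add_edge m a b x y != m x y -> (x = a /\ y = b) \/ (x = b /\ y = a).
Proof.
have [/andP[/eqP-> /eqP->] _|ab] := boolP ((x == a) && (y == b)); first by left.
have [/andP[/eqP-> /eqP->] _|ba] := boolP ((x == b) && (y == a)); first by right.
by rewrite /add_edge !mulnb (negbTE ab) (negbTE ba) !addn0 eqxx.
Qed.

Lemma card_le_mdeg m a (S : {set T}) :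
  (forall y, y \in S -> 0 < m a y) -> #|S| <= mdeg m a.
Proof.
move=> adjS; rewrite -sum1_card.
apply: (@leq_trans (\sum_(y in S) m a y)); first exact: leq_sum.
by rewrite /mdeg [X in _ <= X](bigID (mem S)) leq_addr.
Qed.

Lemma exists_notin (A : {set T}) : #|A| < #|T| -> exists x, x \notin A.
Proof.
rewrite -(cardsC A) -{1}[#|A|]addn0 ltn_add2l => /card_gt0P[x].
by rewrite inE; exists x.
Qed.

Lemma subset_pair_of_card_le2 (S : {set T}) (w : T) :
  #|S| <= 2 -> exists u v, [/\ S \subset [set u; v], u \in w |: S & v \in w |: S].
Proof.
case E: #|S| => [|[|[|//]]] _.
- move/eqP: E; rewrite cards_eq0 => /eqP ->.
  by exists w, w; rewrite sub0set !inE eqxx.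
- move/eqP/cards1P: E => [s ->].
  by exists s, s; rewrite !inE eqxx orbT subsetUl.
- move/eqP/cards2P: E => [s [t [_ ->]]].
  by exists s, t; rewrite !inE !eqxx !orbT subxx.
Qed.

Definition deficient m : {set T} := [set x | mdeg m x < 4].

Lemma deficient_add_edge m x y :
  x != y -> mdeg m x = 3 -> mdeg m y = 3 ->
  deficient (add_edge m x y) = deficient m :\ y :\ x.
Proof.
move=> xy dx dy; apply/setP => z; rewrite !inE mdeg_add_edge.
case: (eqVneq z x) => [->|_]; first by rewrite (negbTE xy) dx.
by case: (eqVneq z y) => [->|_]; rewrite ?dy ?addn0.
Qed.

Section Graphs.

Variable e : rel T.

Lemma three_connected_mono (r : rel T) :
  three_connected e -> subrel e r -> three_connected r.
Proof.
case=> cardT conn er; split=> // u v x y xu xv yu yv.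
apply: connect_sub (conn u v x y xu xv yu yv) => a b /and5P[au av bu bv /er rab].
by apply: connect1; rewrite /= au av bu bv rab.
Qed.

Lemma three_connected_connect : three_connected e -> forall x y, connect e x y.
Proof.
case=> cardT conn x y.
have [u] : exists u, u \notin [set x; y].
  by apply: exists_notin; rewrite cards2; case: (x != y) cardT => /=; lia.
rewrite !inE negb_or => /andP[ux uy].
move: (conn u u x y); rewrite !(eq_sym _ u) ux uy => /(_ isT isT isT isT).
by apply: connect_sub => a b /and5P[_ _ _ _ eab]; apply: connect1.
Qed.

Lemma three_connected_neighbor u v x y :
  three_connected e -> x != y -> x \notin [set u; v] -> y \notin [set u; v] ->
  exists2 b, e x b & b \notin [set u; v].
Proof.
case=> _ conn xy; rewrite !inE !negb_or => /andP[xu xv] /andP[yu yv].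
have /connectP[[|b p] /=] := conn u v x y xu xv yu yv.
  by move=> _ yx; rewrite yx eqxx in xy.
case/andP=> /and5P[_ _ bu bv exb] _ _.
by exists b; rewrite // !inE negb_or bu bv.
Qed.

Lemma three_connected_sdeg x :
  simple_graph e -> three_connected e -> 3 <= sdeg e x.
Proof.
move=> [_ eirr] e3; rewrite leqNgt; apply/negP => small.
set N := [set y | e x y]; have xN : x \notin N by rewrite inE eirr.
have [cardT _] := e3.
have [y yxN] : exists y, y \notin x |: N.
  by apply: exists_notin; rewrite cardsU1; move: small; rewrite /sdeg -/N; lia.
have [w wxy] : exists w, w \notin [set x; y].
  by apply: exists_notin; rewrite cards2; case: (x != y) cardT => /=; lia.
have [u [v [Nuv uN vN]]] := subset_pair_of_card_le2 w (ltnSE small).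
have uvS : [set u; v] \subset w |: N by rewrite subUset !sub1set uN vN.
have notin_uv z : z != w -> z \notin N -> z \notin [set u; v].
  by move=> zw zN; apply: contra (subsetP uvS z) _; rewrite in_setU1 negb_or zw.
move: wxy yxN; rewrite in_set2 in_setU1 !negb_or => /andP[wx wy] /andP[yx yN].
have xy : x != y by rewrite eq_sym.
have xuv : x \notin [set u; v] by apply: notin_uv; rewrite // eq_sym.
have yuv : y \notin [set u; v] by apply: notin_uv; rewrite // eq_sym.
have [b xb] := three_connected_neighbor e3 xy xuv yuv.
by rewrite (subsetP Nuv) // inE.
Qed.

Definition near_regular m : Prop :=
  [/\ forall x y, m x y = m y x, forall x, m x x = 0, forall x y, m x y <= 1,
      forall x y, e x y -> 0 < m x y & forall x, 3 <= mdeg m x <= 4].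

Lemma deficient_mdeg m x : near_regular m -> x \in deficient m -> mdeg m x = 3.
Proof. by case=> _ _ _ _ mdeg34; rewrite inE; have := mdeg34 x; lia. Qed.

Lemma near_regular_deficient_even m : near_regular m -> ~~ odd #|deficient m|.
Proof.
case=> msym mloop _ _ mdeg34.
have total : \sum_x mdeg m x + #|deficient m| = #|T| * 4.
  rewrite /deficient -sum1dep_card [X in _ + X]big_mkcond -big_split -sum_nat_const /=.
  by apply: eq_bigr => x _; have := mdeg34 x; case: (ltnP (mdeg m x) 4); lia.
have := congr1 odd total; rewrite oddD handshake // odd_double oddM andbF.
by case: (odd _).
Qed.

Lemma deficient_clique_card m b :
  near_regular m -> b \in deficient m ->
  (forall x y, x \in deficient m -> y \in deficient m -> x != y -> 0 < m x y) ->
  #|(deficient m :\ b) :|: [set z | e b z]| <= 3.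
Proof.
move=> mreg bD clique; rewrite -(deficient_mdeg mreg bD).
apply: card_le_mdeg => z; rewrite !inE => /orP[/andP[zb zD]|ebz].
  by apply: clique => //; [rewrite inE | rewrite eq_sym].
by case: mreg => _ _ _ em _; exact: em.
Qed.

Lemma deficient_nonadjacent m :
  simple_graph e -> 5 <= #|T| -> three_connected e -> near_regular m ->
  3 <= #|deficient m| ->
  exists x y, [/\ x \in deficient m, y \in deficient m, x != y & m x y = 0].
Proof.
move=> [esym _] cardT e3 mreg cardD; set D := deficient m.
case: (boolP [exists x, exists y, [&& x \in D, y \in D, x != y & m x y == 0]]).
  by case/existsP=> x /existsP[y /and4P[xD yD xy /eqP mxy]]; exists x, y.
move/existsPn=> noedge; exfalso.
have clique x y : x \in D -> y \in D -> x != y -> 0 < m x y.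
  move=> xD yD xy; have /existsPn/(_ y) := noedge x.
  by rewrite xD yD xy lt0n.
have [a aD] : exists a, a \in D by apply/card_gt0P; exact: leq_trans _ cardD.
have D4 : #|D| = 4.
  have : #|D :\ a| <= 3.
    exact: leq_trans (subset_leq_card (subsetUl _ _)) (deficient_clique_card mreg aD clique).
  have : #|D| != 3 by apply: contraNneq (near_regular_deficient_even mreg) => ->.
  by rewrite (cardsD1 a D) aD in cardD *; lia.
have closedD : closed e D.
  suff fwd b z : e b z -> b \in D -> z \in D.
    by move=> b z ebz; apply/idP/idP; apply: fwd; rewrite // esym.
  move=> ebz bD; apply: contraT => zD.
  have four : #|z |: (D :\ b)| = 4.
    by rewrite cardsU1 in_setD1 (negbTE zD) andbF (cardsD1 b D) bD in D4 *; lia.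
  have sub : z |: (D :\ b) \subset (D :\ b) :|: [set z | e b z].
    by rewrite subUset subsetUl sub1set !inE ebz orbT.
  have := leq_trans (subset_leq_card sub) (deficient_clique_card mreg bD clique).
  by rewrite four.
have [y yD] : exists y, y \notin D by apply: exists_notin; lia.
by rewrite -(closed_connect closedD (three_connected_connect e3 a y)) aD in yD.
Qed.

Lemma near_regular_add_edge m x y :
  near_regular m -> x \in deficient m -> y \in deficient m -> x != y -> m x y = 0 ->
  near_regular (add_edge m x y).
Proof.
move=> mreg xD yD xy mxy; have [msym mloop m1 em _] := mreg.
split.
- exact: add_edge_sym.
- exact: add_edge_loopless.
- move=> a b; case: (eqVneq (add_edge m x y a b) (m a b)) => [-> // | /add_edge_changed].
  have le1 := leq_trans (add_edge_le m _ _ xy).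
  by case=> [[-> ->]|[-> ->]]; apply: le1; rewrite ?mxy // msym mxy.
- by move=> a b /em; move/leq_trans; apply; apply: add_edge_ge.
- move=> z; rewrite mdeg_add_edge; have [_ _ _ _ /(_ z)] := mreg.
  case: (eqVneq z x) => [->|_]; first by rewrite (negbTE xy) (deficient_mdeg mreg xD).
  by case: (eqVneq z y) => [->|_]; rewrite ?(deficient_mdeg mreg yD) ?addn0.
Qed.

Lemma near_regular_reduce m :
  simple_graph e -> 5 <= #|T| -> three_connected e -> near_regular m ->
  exists2 m', near_regular m' & #|deficient m'| <= 2.
Proof.
move=> esimple cardT e3; have [k] := ubnP #|deficient m|.
elim: k m => // k IH m ltDk mreg.
case: (leqP #|deficient m| 2) => [small | big]; first by exists m.
have [x [y [xD yD xy mxy]]] := deficient_nonadjacent esimple cardT e3 mreg big.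
apply: (IH (add_edge m x y)); last exact: near_regular_add_edge.
rewrite deficient_add_edge // ?(deficient_mdeg mreg) //.
move: ltDk; rewrite (cardsD1 y (deficient m)) yD (cardsD1 x (deficient m :\ y)).
by rewrite in_setD1 xy xD; lia.
Qed.

Definition quartic_augmentation m : Prop :=
  (forall x y, m x y = m y x) /\
  (forall x, m x x = 0) /\
  (forall x y, e x y -> 1 <= m x y) /\
  three_connected (multigraph_adj m) /\
  (forall x, mdeg m x = 4) /\
  (forall x y, m x y <= 2) /\
  (forall x y u v, m x y = 2 -> m u v = 2 -> (u = x /\ v = y) \/ (u = y /\ v = x)).

Lemma near_regular_augmentation m :
  three_connected e -> near_regular m -> deficient m = set0 -> quartic_augmentation m.
Proof.
move=> e3 [msym mloop m1 em mdeg34] D0.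
do 3![split=> //]; split; first exact: three_connected_mono e3 em.
split; first by move=> x; have := in_set0 x; rewrite -D0 inE; have := mdeg34 x; lia.
by split=> [x y | x y u v]; have := m1 x y; lia.
Qed.

Lemma near_regular_pair_augmentation m a b :
  three_connected e -> near_regular m -> a != b -> deficient m = [set a; b] ->
  quartic_augmentation (add_edge m a b).
Proof.
move=> e3 mreg ab Dab; have [msym mloop m1 em mdeg34] := mreg.
have em' x y : e x y -> 0 < add_edge m a b x y.
  by move/em/leq_trans; apply; apply: add_edge_ge.
have double x y : add_edge m a b x y = 2 -> (x = a /\ y = b) \/ (x = b /\ y = a).
  move=> m2; apply: (@add_edge_changed m); rewrite m2.
  by have := m1 x y; case: (m x y) => [|[]].
split; first exact: add_edge_sym.
split; first exact: add_edge_loopless.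
split=> //; split; first exact: three_connected_mono e3 em'.
split.
  move=> z; rewrite mdeg_add_edge.
  have dD w : w \in deficient m -> mdeg m w = 3 by apply: deficient_mdeg.
  case: (eqVneq z a) => [->|za]; first by rewrite (negbTE ab) dD // Dab !inE eqxx.
  case: (eqVneq z b) => [->|zb]; first by rewrite dD // Dab !inE eqxx orbT.
  have : z \notin deficient m by rewrite Dab !inE negb_or za zb.
  by rewrite inE addn0; have := mdeg34 z; lia.
split=> [x y | x y u v /double[[-> ->]|[-> ->]] /double[[-> ->]|[-> ->]]];
  [|by left|by right|by right|by left].
by apply: leq_trans (add_edge_le m _ _ ab) _; have := m1 x y; lia.
Qed.

Lemma mdeg_graph x : mdeg (fun x y => e x y : nat) x = sdeg e x.
Proof. by rewrite /sdeg -sum1dep_card big_mkcond. Qed.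

Lemma near_regular_graph :
  simple_graph e -> three_connected e -> (forall x, sdeg e x <= 4) ->
  near_regular (fun x y => e x y : nat).
Proof.
move=> [esym eirr] e3 sdeg4; split=> [x y | x | x y | x y -> // | x].
- by rewrite esym.
- by rewrite eirr.
- exact: leq_b1.
- by rewrite mdeg_graph sdeg4 three_connected_sdeg.
Qed.

End Graphs.
End Multigraphs.

Theorem lemma1 (T : finType) (e : rel T) :
  simple_graph e ->
  5 <= #|T| ->
  three_connected e ->
  (forall x : T, sdeg e x <= 4) ->
  exists m : T -> T -> nat,
    (* m is a (loopless) multigraph on the same vertex set *)
    (forall x y : T, m x y = m y x) /\
    (forall x : T, m x x = 0) /\
    (* G' is obtained from G by adding edges *)
    (forall x y : T, e x y -> 1 <= m x y) /\
    (* G' is 3-connected *)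
    three_connected (multigraph_adj m) /\
    (* G' is 4-regular *)
    (forall x : T, mdeg m x = 4) /\
    (* at most one pair joined by more than one edge, and by exactly two *)
    (forall x y : T, m x y <= 2) /\
    (forall x y u v : T, m x y = 2 -> m u v = 2 ->
       (u = x /\ v = y) \/ (u = y /\ v = x)).
Proof.
move=> esimple cardT e3 sdeg4.
have [m mreg smallD] :=
  near_regular_reduce esimple cardT e3 (near_regular_graph esimple e3 sdeg4).
have : (#|deficient m| == 0) || (#|deficient m| == 2).
  by move: smallD (near_regular_deficient_even mreg); case: #|_| => [|[|[|]]].
case/orP=> [/eqP/cards0_eq D0 | /cards2P[a [b [ab Dab]]]].
  by exists m; apply: near_regular_augmentation.
by exists (add_edge m a b); apply: near_regular_pair_augmentation.
Qed.
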